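(* Let $k<n$ and let $G=[I_k\mid A]$ be a $k\times n$ binary matrix in systematic form, where $A$ is a $k\times(n-k)$ binary matrix whose $i$-th row is $g_i\in(\mathbb{F}_2)^{n-k}$. Let $\mathcal{C}\subseteq(\mathbb{F}_2)^n$ be the binary linear code spanned by the rows of $G$. Let $X_1,\dots,X_n$ be i.i.d. $\mathbb{F}_2$-valued random variables, and for $x\in\mathbb{F}_2$ write $P(X_1=x)=\tfrac12+v(x)$. Thus $v(0)=-v(1)$. Use the convention $v(\cdot)^0=1$ and $v(\cdot)^1=v(\cdot)$. Let $\bar Y=G(X_1,\dots,X_n)^T$. For $\gamma=(\gamma_1,\dots,\gamma_k)\in(\mathbb{F}_2)^k$ and $b=(b_1,\dots,b_n)\in(\mathbb{F}_2)^n$ of Hamming weight $W(b)$, define $$T(b,\gamma)=\frac{1}{2^{\,n-W(b)}}\sum_{\omega=(\omega_{k+1},\dots,\omega_n)\in(\mathbb{F}_2)^{n-k}}\ \prod_{i=1}^{k}v(\gamma_i+g_i\cdot\omega)^{b_i}\prod_{j=k+1}^{n}v(\omega_j)^{b_j},$$ where $g_i\cdot\omega$ denotes the standard dot product over $\mathbb{F}_2$. Then: (i) $P(\bar Y=\gamma)=\sum_{b\in(\mathbb{F}_2)^n}T(b,\gamma)$; (ii) $T(b,\gamma)=0$ for every $b\notin\mathcal{C}$ and every $\gamma$; (iii) $T(0,\gamma)=2^{-k}$. Consequently, $$P(\bar Y=\gamma)-\frac{1}{2^k}=\sum_{b\in\mathcal{C}\setminus\{0\}}T(b,\gamma)$$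 for every $\gamma\in(\mathbb{F}_2)^k$.
   Context: A binary matrix $G$ is in systematic form if its first $k$ columns form the $k\times k$ identity matrix $I_k$. The Hamming weight $W(b)$ of $b\in(\mathbb{F}_2)^n$ is the number of indices $i$ with $b_i=1$. *)

From HB Require Import structures.
From mathcomp Require Import all_boot all_order all_algebra.
Set Implicit Arguments. Unset Strict Implicit. Unset Printing Implicit Defensive.
Import Order.TTheory GRing.Theory Num.Theory.
Local Open Scope ring_scope.

Definition sysG (k m : nat) (A : 'M['F_2]_(k, m)) : 'M['F_2]_(k, k + m) :=
  row_mx 1%:M A.

Definition wt (n : nat) (b : 'rV['F_2]_n) : nat := #|[set j : 'I_n | b 0 j != 0]|.

Definition pw (R : ringType) (r : R) (e : 'F_2) : R := if e == 0 then 1 else r.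

(* P(Ybar = gamma) where Ybar = G X^T, X_1..X_n i.i.d. with P(X_1 = x) = p x:
   the joint law of (X_1,..,X_n) is the product measure. *)
Definition probY (R : ringType) (k n : nat) (p : 'F_2 -> R)
    (G : 'M['F_2]_(k, n)) (gam : 'rV['F_2]_k) : R :=
  \sum_(x : 'rV['F_2]_n | G *m x^T == gam^T) \prod_(j < n) p (x 0 j).

Definition vfun (R : fieldType) (p : 'F_2 -> R) (x : 'F_2) : R := p x - 2%:R^-1.

(* The quantity T(b, gamma); the i-th row of A is g_i, and
   omega = (omega_{k+1},...,omega_n) is indexed by 'I_m. *)
Definition Tterm (R : fieldType) (k m : nat) (p : 'F_2 -> R)
    (A : 'M['F_2]_(k, m)) (b : 'rV['F_2]_(k + m)) (gam : 'rV['F_2]_k) : R :=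
  (2%:R ^+ ((k + m) - wt b))^-1 *
  \sum_(om : 'rV['F_2]_m)
     ((\prod_(i < k) pw (vfun p (gam 0 i + \sum_(j < m) A i j * om 0 j))
                        (b 0 (lshift m i))) *
      (\prod_(j < m) pw (vfun p (om 0 j)) (b 0 (rshift k j)))).

(* A solution x of G x^T = gam^T is determined by its tail om, namely
   x = (gam - om A^T, om), so P(Ybar = gam) is a sum over om of products
   prod_j p(x_j).  Writing p = 1/2 + v and expanding each product over the
   subsets b of coordinates gives (i).  Replacing om by om + e_j multiplies the
   b-summand by (-1)^(s_j), where s = b_right - b_left A is the syndrome of b;
   if b is not a codeword some s_j = 1, so the sum over om is its own negative
   and vanishes, which is (ii).  For b = 0 all 2^m summands equal 1, giving (iii). *)

From HB Require Import structures.
From mathcomp Require Import all_boot all_order all_algebra.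
From mathcomp Require Import ring.
Import Order.TTheory GRing.Theory Num.Theory.
Local Open Scope ring_scope.

Lemma F2_cases (x : 'F_2) : x = 0 \/ x = 1.
Proof. by case: x => [[|[|i]] //= lti]; [left | right]; apply/val_inj. Qed.

Lemma pchar_F2 : 2%N \in [pchar 'F_2].
Proof. exact: pchar_Fp. Qed.

Lemma F2_neq0 (x : 'F_2) : (x != 0) = (x == 1).
Proof. by case: (F2_cases x) => ->. Qed.

Lemma sum_F2 (V : nmodType) (F : 'F_2 -> V) : \sum_(e : 'F_2) F e = F 0 + F 1.
Proof.
rewrite (bigD1 0) //= (bigD1 1) //= big1 ?addr0 // => e /andP[e1 e0].
by case: (F2_cases e) e1 e0 => ->.
Qed.

Lemma wt0 (n : nat) : wt (0 : 'rV['F_2]_n) = 0%N.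
Proof. by apply/eqP; rewrite cards_eq0; apply/eqP/setP => j; rewrite !inE mxE. Qed.

Lemma prod_addrE (R : comNzRingType) (n : nat) (c : R) (f : 'I_n -> R) :
  \prod_(j < n) (c + f j) =
  \sum_(b : 'rV['F_2]_n) c ^+ (n - wt b) * \prod_(j < n) pw (f j) (b 0 j).
Proof.
pose q j (e : 'F_2) := if e == 0 then c else f j.
transitivity (\prod_(j < n) \sum_(e : 'F_2) q j e).
  by apply: eq_bigr => j _; rewrite sum_F2.
rewrite bigA_distr_bigA /= (reindex (fun b : 'rV['F_2]_n => [ffun j => b 0 j])).
  apply: eq_bigr => b _.
  have -> : (n - wt b)%N = #|[pred j : 'I_n | b 0 j == 0]|.
    rewrite /wt -{1}(card_ord n) -(cardsC [set j | b 0 j != 0]) addKn.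
    by apply: eq_card => j; rewrite !inE negbK.
  rewrite -prodr_const [X in X * _]big_mkcond -big_split /=.
  by apply: eq_bigr => j _; rewrite ffunE inE /q /pw; case: eqP; rewrite ?mulr1 ?mul1r.
exists (fun g : {ffun 'I_n -> 'F_2} => \row_j g j) => [b _ | g _].
  by apply/rowP => j; rewrite mxE ffunE.
by apply/ffunP => j; rewrite !ffunE mxE.
Qed.

Definition sgF2 (R : nzRingType) (e : 'F_2) : R := (-1) ^+ e.

Lemma sgF2_1 (R : nzRingType) : sgF2 R 1 = -1.
Proof. by []. Qed.

Lemma sgF2D (R : nzRingType) (d e : 'F_2) : sgF2 R (d + e) = sgF2 R d * sgF2 R e.
Proof.
rewrite /sgF2; case: (F2_cases d) => ->; case: (F2_cases e) => ->;
  by rewrite /= ?expr0 ?expr1 ?mulrNN ?mul1r ?mulr1.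
Qed.

Lemma sgF2_sum (R : nzRingType) (I : Type) (r : seq I) (F : I -> 'F_2) :
  sgF2 R (\sum_(i <- r) F i) = \prod_(i <- r) sgF2 R (F i).
Proof. by apply: big_morph; [exact: sgF2D | exact: expr0]. Qed.

Lemma sum_shift_opp_eq0 (V : finZmodType) (R : idomainType) (f : V -> R) (c : V) :
  2%:R != 0 :> R -> (forall x, f (x + c) = - f x) -> \sum_x f x = 0.
Proof.
move=> two_neq0 fcN; set S := \sum_x f x.
have SN : S = - S.
  by rewrite {1}/S (reindex_inj (addIr c)) -sumrN; apply: eq_bigr => x _.
have /eqP : S * 2%:R = 0 by rewrite mulr_natr mulr2n {1}SN addNr.
by rewrite mulf_eq0 (negPf two_neq0) orbF => /eqP.
Qed.

Lemma submx_sysG (k m : nat) (A : 'M['F_2]_(k, m)) (b : 'rV['F_2]_(k + m)) :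
  (b <= sysG A)%MS = (rsubmx b == lsubmx b *m A).
Proof.
apply/idP/eqP => [/submxP[D ->] | bA].
  by rewrite /sysG mul_mx_row mulmx1 row_mxKl row_mxKr.
by rewrite -[b]hsubmxK bA -{1}[lsubmx b]mulmx1 -mul_mx_row submxMl.
Qed.

Lemma row_mx_mul_tr (F : comPzRingType) (k m : nat) (A : 'M[F]_(k, m))
    (c : 'rV[F]_m) (b : 'rV[F]_(k + m)) :
  row_mx (- (c *m A^T)) c *m b^T = c *m (rsubmx b - lsubmx b *m A)^T.
Proof.
rewrite -{1}[b]hsubmxK tr_row_mx mul_row_col mulNmx -mulmxA -trmx_mul.
by rewrite addrC -mulmxBr -linearB.
Qed.

Section SystematicCode.

Variables (k m : nat) (A : 'M['F_2]_(k, m)) (gam : 'rV['F_2]_k).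

(* The unique [x] with [sysG A *m x^T = gam^T] whose last [m] coordinates are [om]. *)
Definition sys_word (om : 'rV['F_2]_m) : 'rV['F_2]_(k + m) :=
  row_mx (gam - om *m A^T) om.

Lemma sys_wordD (om c : 'rV['F_2]_m) :
  sys_word (om + c) = sys_word om + row_mx (- (c *m A^T)) c.
Proof. by rewrite /sys_word add_row_mx mulmxDl opprD addrA. Qed.

Lemma sysG_mul_tr (x : 'rV['F_2]_(k + m)) :
  sysG A *m x^T = (lsubmx x + rsubmx x *m A^T)^T.
Proof.
by rewrite -{1}[x]hsubmxK /sysG tr_row_mx mul_row_col mul1mx linearD /= trmx_mul trmxK.
Qed.

Lemma probY_sysG (R : nzRingType) (p : 'F_2 -> R) :
  probY p (sysG A) gam = \sum_om \prod_(j < k + m) p (sys_word om 0 j).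
Proof.
rewrite /probY (reindex_onto sys_word rsubmx) => [|x]; last first.
  rewrite sysG_mul_tr (inj_eq (@trmx_inj _ _ _)) /sys_word => /eqP <-.
  by rewrite addrK -{3}[x]hsubmxK.
apply: eq_bigl => om.
by rewrite sysG_mul_tr /sys_word row_mxKl row_mxKr subrK !eqxx.
Qed.

Lemma Tterm_sys_word (R : fieldType) (p : 'F_2 -> R) (b : 'rV['F_2]_(k + m)) :
  Tterm p A b gam = (2%:R ^+ (k + m - wt b))^-1 *
    \sum_om \prod_(j < k + m) pw (vfun p (sys_word om 0 j)) (b 0 j).
Proof.
congr (_ * _); apply: eq_bigr => om _; rewrite big_split_ord /=.
congr (_ * _); apply: eq_bigr => j _; rewrite /sys_word ?row_mxEl ?row_mxEr //.
rewrite !mxE (oppr_pchar2 pchar_F2); congr (pw (vfun p (_ + _)) _).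
by apply: eq_bigr => i _; rewrite !mxE mulrC.
Qed.

End SystematicCode.

Section SignFlip.

Variables (R : fieldType) (p : 'F_2 -> R).
Hypotheses (two_neq0 : 2%:R != 0 :> R) (p_sum1 : p 0 + p 1 = 1).

Lemma vfun_addr (x d : 'F_2) : vfun p (x + d) = sgF2 R d * vfun p x.
Proof.
have p1E : p 1 = 1 - p 0 by rewrite -p_sum1 addrC addKr.
case: (F2_cases d) => ->; first by rewrite addr0 mul1r.
rewrite sgF2_1 /vfun; case: (F2_cases x) => ->.
  by rewrite add0r p1E; field.
by rewrite (addrr_pchar2 pchar_F2) p1E; field.
Qed.

Lemma pw_sgF2 (r : R) (d e : 'F_2) : pw (sgF2 R d * r) e = sgF2 R (d * e) * pw r e.
Proof.
rewrite /sgF2 /pw; case: (F2_cases d) => ->; case: (F2_cases e) => ->;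
  by rewrite /= ?mul0r ?mulr0 ?mul1r ?mulr1.
Qed.

Lemma prod_pw_vfun_addr (n : nat) (w d b : 'rV['F_2]_n) :
  \prod_(j < n) pw (vfun p ((w + d) 0 j)) (b 0 j)
  = sgF2 R ((d *m b^T) 0 0) * \prod_(j < n) pw (vfun p (w 0 j)) (b 0 j).
Proof.
under eq_bigr do rewrite mxE vfun_addr pw_sgF2.
rewrite big_split /= mxE sgF2_sum; congr (_ * _).
by apply: eq_bigr => j _; rewrite mxE.
Qed.

End SignFlip.

Section BiasExpansion.

Variables (R : fieldType) (k m : nat) (A : 'M['F_2]_(k, m)) (p : 'F_2 -> R).
Hypothesis two_neq0 : 2%:R != 0 :> R.

Lemma probY_sum_Tterm (gam : 'rV['F_2]_k) :
  probY p (sysG A) gam = \sum_(b : 'rV['F_2]_(k + m)) Tterm p A b gam.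
Proof.
under [RHS]eq_bigr do rewrite Tterm_sys_word mulr_sumr.
rewrite probY_sysG [RHS]exchange_big /=; apply: eq_bigr => om _.
have pE x : p x = 2%:R^-1 + vfun p x by rewrite /vfun addrC subrK.
under eq_bigr do rewrite pE.
by rewrite prod_addrE; apply: eq_bigr => b _; rewrite exprVn.
Qed.

Lemma Tterm0 (gam : 'rV['F_2]_k) : Tterm p A 0 gam = (2%:R ^+ k)^-1.
Proof.
rewrite Tterm_sys_word wt0 subn0 (eq_bigr (fun _ => 1)) => [|om _]; last first.
  by rewrite big1 // => j _; rewrite [X in pw _ X]mxE.
rewrite sumr_const card_mx card_Fp // mul1n natrX exprD invfM -mulrA.
by rewrite mulVf ?mulr1 // expf_neq0.
Qed.

Hypothesis p_sum1 : p 0 + p 1 = 1.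

Lemma Tterm_eq0 (b : 'rV['F_2]_(k + m)) (gam : 'rV['F_2]_k) :
  ~~ (b <= sysG A)%MS -> Tterm p A b gam = 0.
Proof.
rewrite submx_sysG -subr_eq0.
set u := rsubmx b - lsubmx b *m A => /eqP/rowP/eqfunP/forallPn[j0].
rewrite [X in _ != X]mxE F2_neq0 => /eqP u1.
rewrite Tterm_sys_word (@sum_shift_opp_eq0 _ _ _ 'e_j0) ?mulr0 // => om.
rewrite sys_wordD prod_pw_vfun_addr // row_mx_mul_tr -/u -rowE mxE [u^T _ _]mxE u1.
by rewrite sgF2_1 mulN1r.
Qed.

End BiasExpansion.

Theorem mainTheorem2 (R : realFieldType) (k m : nat) (hm : (0 < m)%N)
    (A : 'M['F_2]_(k, m)) (p : 'F_2 -> R)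
    (hp0 : forall x, 0 <= p x) (hp1 : p 0 + p 1 = 1) :
  (forall gam : 'rV['F_2]_k,
      probY p (sysG A) gam = \sum_(b : 'rV['F_2]_(k + m)) Tterm p A b gam) /\
  (forall (b : 'rV['F_2]_(k + m)) (gam : 'rV['F_2]_k),
      ~~ (b <= sysG A)%MS -> Tterm p A b gam = 0) /\
  (forall gam : 'rV['F_2]_k, Tterm p A 0 gam = (2%:R ^+ k)^-1) /\
  (forall gam : 'rV['F_2]_k,
      probY p (sysG A) gam - (2%:R ^+ k)^-1
      = \sum_(b : 'rV['F_2]_(k + m) | (b <= sysG A)%MS && (b != 0))
          Tterm p A b gam).
Proof.
have two_neq0 : 2%:R != 0 :> R by rewrite pnatr_eq0.
split; first exact: probY_sum_Tterm.
split; first exact: Tterm_eq0.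
split; first exact: Tterm0.
move=> gam; rewrite probY_sum_Tterm (bigID (fun b => (b <= sysG A)%MS)) /=.
rewrite [\sum_(b | ~~ _) _]big1 => [|b]; last exact: Tterm_eq0.
rewrite addr0 (bigD1 0) ?sub0mx //= Tterm0 // addrAC subrr add0r.
by apply: eq_bigl => b; rewrite andbC.
Qed.
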